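(* Let $\Lambda$ be a hypergraph on a finite vertex set $V$ (given as a map $\Lambda:\mathcal{P}(V)\to\mathbb{Z}^+$, $\Lambda(A)$ being the number of hyperedges over $A$), and let $A\subseteq V$. Then $A$ is essential for $\Lambda$ if and only if $\Lambda(A)=1$ and $|A\setminus V^*(\Lambda\mathbb{1}_{\{A\}^C})|=1$.
   Context: $\Lambda\mathbb{1}_{\{A\}^C}$ denotes the hypergraph obtained from $\Lambda$ by removing all hyperedges over the set $A$ (i.e. setting the multiplicity of $A$ to $0$). Hyperedges over singleton sets are called patches. Identifiable vertices: repeatedly pick a vertex carrying a patch, delete that vertex and the patch, and collapse every other hyperedge containing it onto its remaining vertices; continue until no patches remain. The set of removed vertices does not depend on the order of choices and is denoted $V^*(\Lambda)$. A set $A\subseteq V$ is called essential for $\Lambda$ if $\Lambda(A)=1$ and $V^*(\Lambda\mathbb{1}_{\{A\}^C})\neq V^*(\Lambda)$. *)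

From mathcomp Require Import all_boot.
Set Implicit Arguments. Unset Strict Implicit. Unset Printing Implicit Defensive.

Definition hypergraph (V : finType) := {ffun {set V} -> nat}.

Section Peel.
Variable V : finType.

Definition remove_edge (L : hypergraph V) (A : {set V}) : hypergraph V :=
  [ffun B : {set V} => if B == A then 0 else L B].

(* One peeling step at a vertex v carrying a patch: delete v and one patch
   {v}; every other hyperedge B containing v is collapsed onto B :\ v.
   The collapsed hypergraph lives on V \ {v} (sets containing v get 0). *)
Definition peel_step (L : hypergraph V) (v : V) : hypergraph V :=
  [ffun C : {set V} => if v \in C then 0
             else L C + L (v |: C) - (C == set0)].

Definition peel_round (st : hypergraph V * {set V}) : hypergraph V * {set V} :=
  match [pick v | 0 < st.1 [set v]] with
  | Some v => (peel_step st.1 v, v |: st.2)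
  | None => st
  end.

(* Each vertex is removed at most once, so #|V| rounds reach termination.
   V*(L) = set of removed vertices (independent of choice order). *)
Definition Vstar (L : hypergraph V) : {set V} :=
  (iter #|V| peel_round (L, set0)).2.

Definition essential (L : hypergraph V) (A : {set V}) : Prop :=
  L A = 1 /\ Vstar (remove_edge L A) <> Vstar L.

End Peel.

From mathcomp Require Import all_boot.
Set Implicit Arguments. Unset Strict Implicit. Unset Printing Implicit Defensive.

(* V*(L) is the least set T closed under forcing: whenever a hyperedge B has
   all its vertices but v in T, also v is in T. Indeed, once the vertices in S
   are peeled, the nonempty hyperedges of the current hypergraph are exactly
   the traces B \ S of the hyperedges of L, so a patch {v} is a hyperedge whose
   only vertex outside S is v. Deleting the hyperedge A keeps the other
   closure conditions, so it can only shrink V*, and it leaves V* unchanged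
   iff V*(L 1_{A^C}) is still closed for A, i.e. iff A does not have exactly
   one vertex outside V*(L 1_{A^C}). *)

Section Hypergraph.
Variable V : finType.
Implicit Types (L M : hypergraph V) (A B C S T X : {set V}) (v : V).

Lemma set1_neq0 v : [set v] != set0.
Proof. by apply/set0Pn; exists v; rewrite set11. Qed.

Lemma setD1_eq v X C : v \notin C -> X :\ v = C <-> X = C \/ X = v |: C.
Proof.
have setD1_id (Y : {set V}) : v \notin Y -> Y :\ v = Y.
  by move=> vY; apply/setDidPl; rewrite disjoint_sym disjoints1.
move=> vC; split=> [<-|[->|->]]; last by rewrite setU1K.
  by case: (boolP (v \in X)) => [/setD1K|/setD1_id]; [right | left].
exact: setD1_id.
Qed.

Lemma setD_eq1 B S v :
  (B :\: S == [set v]) = [&& v \in B, v \notin S & B :\ v \subset S].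
Proof.
apply/eqP/and3P => [BS | [vB vS sub]].
  have /setDP[vB vS] : v \in B :\: S by rewrite BS set11.
  split=> //; apply/subsetP => x /setD1P[xv xB]; apply: contraNT xv => xS.
  by rewrite -in_set1 -BS inE xS.
apply/eqP; rewrite eqEsubset sub1set in_setD vS vB !andbT.
apply/subsetP => x /setDP[xB xS]; rewrite inE.
by apply: contraNT xS => xv; apply: (subsetP sub); rewrite !inE xv.
Qed.

Definition edge_closed B T := [forall v in B, (B :\ v \subset T) ==> (v \in T)].

Definition forced_closed L T := forall B, 0 < L B -> edge_closed B T.

Lemma edge_closedP B T :
  reflect (forall v, v \in B -> B :\ v \subset T -> v \in T) (edge_closed B T).
Proof.
by apply: (iffP forall_inP) => closedB v vB; apply/implyP/closedB.
Qed.

Lemma edge_closedNcard B T : ~~ edge_closed B T = (#|B :\: T| == 1).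
Proof.
apply/forall_inPn/cards1P => [[v vB] | [v /eqP]].
  by rewrite negb_imply => /andP[sub vT]; exists v; apply/eqP; rewrite setD_eq1 vB vT.
by rewrite setD_eq1 => /and3P[vB vT sub]; exists v; rewrite // negb_imply sub.
Qed.

Lemma forced_closed_remove_edge L A T :
  forced_closed L T <-> forced_closed (remove_edge L A) T /\ (0 < L A -> edge_closed A T).
Proof.
split=> [closedT | [closedT closedA] B].
  by split=> [B|]; rewrite ?ffunE; [case: ifP => // _|]; apply: closedT.
by case: (eqVneq B A) => [-> // | BA LB]; apply: closedT; rewrite ffunE (negPf BA).
Qed.

Definition has_patch M := [exists v, 0 < M [set v]].

Section Peeling.
Variable L : hypergraph V.

(* Multiplicities are forgotten, and so is the empty set, which collects the
   used-up patches. *)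
Definition peel_inv (st : hypergraph V * {set V}) :=
  forall C, C != set0 -> 0 < st.1 C <-> exists2 B, 0 < L B & B :\: st.2 = C.

Definition peel_iter k := iter k (@peel_round V) (L, set0).

Lemma patch_notin_removed st v : peel_inv st -> 0 < st.1 [set v] -> v \notin st.2.
Proof.
move=> inv /(inv _ (set1_neq0 v))[B _ BS].
by have /setDP[] : v \in B :\: st.2 by rewrite BS set11.
Qed.

Lemma peel_inv_round st : peel_inv st -> peel_inv (peel_round st).
Proof.
move=> inv; rewrite /peel_round; case: pickP => [v /= _ | //] C C0.
have traceE B : B :\: (v |: st.2) = (B :\: st.2) :\ v by rewrite setDDl setUC.
rewrite ffunE; case: ifP => [vC | /negbT vC].
  by split=> // -[B _]; rewrite traceE => BC; move: vC; rewrite -BC setD11.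
have vC0 : v |: C != set0 by apply/set0Pn; exists v; rewrite setU11.
rewrite (negPf C0) subn0 addn_gt0; split.
  by case/orP => [/(inv C C0) | /(inv _ vC0)] [B LB BC]; exists B;
    rewrite // traceE; apply/(setD1_eq _ vC); [left | right].
case=> B LB; rewrite traceE => /(setD1_eq _ vC)[BC | BC]; apply/orP;
  [left; apply/(inv C C0) | right; apply/(inv _ vC0)]; by exists B.
Qed.

Lemma peel_inv_iter k : peel_inv (peel_iter k).
Proof.
elim: k => [C _ | k IH]; last exact: peel_inv_round.
by split=> [LC | [B LB <-]]; [exists C; rewrite ?setD0 | rewrite setD0].
Qed.

Lemma peel_round_id st : ~~ has_patch st.1 -> peel_round st = st.
Proof.
move/existsPn=> nopatch; rewrite /peel_round.
by case: pickP => // v; rewrite (negPf (nopatch v)).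
Qed.

Lemma card_peel_round st :
  peel_inv st -> has_patch st.1 -> #|(peel_round st).2| = #|st.2|.+1.
Proof.
move=> inv /existsP[w pw]; rewrite /peel_round; case: pickP => [v pv | /(_ w)].
  by rewrite /= cardsU1 (patch_notin_removed inv pv).
by rewrite pw.
Qed.

Lemma peel_iter_progress k : k <= #|(peel_iter k).2| \/ ~~ has_patch (peel_iter k).1.
Proof.
elim: k => [|k IH]; first by left.
rewrite /peel_iter iterS -/(peel_iter k).
case: (boolP (has_patch (peel_iter k).1)) => [p | np]; last by right; rewrite peel_round_id.
left; rewrite card_peel_round ?ltnS //; last exact: peel_inv_iter.
by case: IH; rewrite ?p.
Qed.

Lemma peel_iter_patchless : ~~ has_patch (peel_iter #|V|).1.
Proof.
case: (peel_iter_progress #|V|) => // full; apply/existsP => -[v pv].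
have := patch_notin_removed (peel_inv_iter _) pv.
suff -> : (peel_iter #|V|).2 = setT by rewrite inE.
by apply/eqP; rewrite eqEcard subsetT cardsT.
Qed.

Lemma Vstar_forced_closed : forced_closed L (Vstar L).
Proof.
have /existsPn nopatch := peel_iter_patchless.
move=> B LB; apply/edge_closedP => v vB sub; apply: contraNT (nopatch v) => vS.
by apply/(peel_inv_iter #|V| (set1_neq0 v)); exists B => //; apply/eqP; rewrite setD_eq1 vB vS.
Qed.

Lemma Vstar_min T : forced_closed L T -> Vstar L \subset T.
Proof.
move=> closedT; rewrite /Vstar -/(peel_iter #|V|).
elim: #|V| => [|k IH]; first exact: sub0set.
rewrite /peel_iter iterS -/(peel_iter k) /peel_round; case: pickP => [v pv | //] /=.
rewrite subUset IH andbT sub1set.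
have [B LB /eqP] := (peel_inv_iter k (set1_neq0 v)).1 pv.
rewrite setD_eq1 => /and3P[vB _ sub].
exact: (edge_closedP _ _ (closedT B LB) v vB (subset_trans sub IH)).
Qed.

End Peeling.

Lemma Vstar_remove_edge_sub L A : Vstar (remove_edge L A) \subset Vstar L.
Proof.
apply: Vstar_min.
by case/(forced_closed_remove_edge _ A): (Vstar_forced_closed (L := L)).
Qed.

Lemma Vstar_remove_edgeE L A : 0 < L A ->
  (Vstar (remove_edge L A) == Vstar L) = edge_closed A (Vstar (remove_edge L A)).
Proof.
move=> LA; apply/eqP/idP => [-> | closedA]; first exact: Vstar_forced_closed.
apply/eqP; rewrite eqEsubset Vstar_remove_edge_sub Vstar_min //.
by apply/(forced_closed_remove_edge _ A); split=> [|_ //]; apply: Vstar_forced_closed.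
Qed.

End Hypergraph.

Theorem proposition4 (V : finType) (L : hypergraph V) (A : {set V}) :
  essential L A <-> (L A = 1 /\ #|A :\: Vstar (remove_edge L A)| = 1).
Proof.
split=> -[LA1 changed]; split=> //.
  by apply/eqP; rewrite -edge_closedNcard -Vstar_remove_edgeE ?LA1 //; apply/eqP.
by apply/eqP; rewrite Vstar_remove_edgeE ?LA1 // edge_closedNcard changed.
Qed.
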